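(* Let $(D,\Gamma)$ be a consistent action theory, $n\ge 0$, and let $X$ be an answer set of the program $\pi$. If for some $t\in\{0,\dots,n\}$ the set $X$ contains no atom of the form $occ(a,t)$, then $X$ contains no atom of the form $occ(a,t')$ for any $t'$ with $t\le t'\le n$.
   Context: Action language $\mathcal{B}$: fix finite sets $\mathbf{F}$ of fluents and $\mathbf{A}$ of actions. A fluent literal is $f$ or $\neg f$ ($f\in\mathbf{F}$); the complement $\bar l$ of $f$ is $\neg f$ and of $\neg f$ is $f$. A set of fluent literals is consistent if it contains no pair $f,\neg f$; an interpretation is a maximal consistent set. For a set $u$ of literals, $u\models p_1\wedge\dots\wedge p_k$ means $\{p_1,\dots,p_k\}\subseteq u$. A domain description $D$ is a finite set of static causal laws $\mathbf{caused}(\{p_1,\dots,p_k\},f)$ (their set is $D_C$), dynamic causal laws $\mathbf{causes}(a,f,\{p_1,\dots,p_k\})$ and executability conditions $\mathbf{executable}(a,\{p_1,\dots,p_k\})$, with $a\in\mathbf{A}$ and $f,p_i$ fluent literals; $\Gamma$ is a set of propositions $\mathbf{initially}(f)$. A consistent set $u$ is closed under $D_C$ if for every $\mathbf{caused}(P,f)\in D_C$ with $P\subseteq u$, $f\in u$; $Cl_{D_C}(u)$ is the least consistent superset of $u$ closed under $D_C$ (undefined if none). A state is an interpretation closed under $D_C$. Action $a$ is executable in state $s$ if some $\mathbf{executable}(a,P)\in D$ has $P\subseteq s$. $E(a,s)=\{f\mid \mathbf{causes}(a,f,P)\in D,\ P\subseteq s\}$. $\Phi(a,s)=\{s'\mid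 s'\text{ a state},\ s'=Cl_{D_C}(E(a,s)\cup(s\cap s'))\}$ if $a$ is executable in $s$, and $\Phi(a,s)=\emptyset$ otherwise. $D$ is consistent if $\Phi(a,s)\ne\emptyset$ whenever $a$ is executable in state $s$; $(D,\Gamma)$ is consistent if $D$ is consistent and $s_0^\Gamma:=\{f\mid\mathbf{initially}(f)\in\Gamma\}$ is a state of $D$. Answer sets: a ground normal program consists of rules $h\leftarrow b_1,\dots,b_m,\mathit{not}\,c_1,\dots,\mathit{not}\,c_r$ and constraints $\bot\leftarrow b_1,\dots,b_m,\mathit{not}\,c_1,\dots,\mathit{not}\,c_r$. For a set $S$ of atoms, the reduct $\Pi^S$ deletes every rule/constraint containing $\mathit{not}\,c$ with $c\in S$ and deletes all $\mathit{not}$-literals from the rest; $S$ is an answer set of $\Pi$ if $S$ is the least set of atoms closed under the non-constraint rules of $\Pi^S$ and no constraint of $\Pi^S$ has its whole body contained in $S$. The program $\pi$ (ground; $t$ ranges over $\{0,\dots,n\}$ unless stated): (1) $holds(l,0)\leftarrow$ for each $\mathbf{initially}(l)\in\Gamma$; (2) $possible(a,t)\leftarrow holds(p_1,t),\dots,holds(p_k,t)$ for each $\mathbf{executable}(a,\{p_1,\dots,p_k\})\in D$; (3) for $t\in\{0,\dots,n-1\}$, $holds(f,t+1)\leftarrow occ(a,t),possible(a,t),holds(p_1,t),\dots,holds(p_k,t)$ for each $\mathbf{causes}(a,f,\{p_1,\dots,p_k\})\in D$; (4) $holds(f,t)\leftarrow holds(p_1,t),\dots,holds(p_k,t)$ for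 each $\mathbf{caused}(\{p_1,\dots,p_k\},f)\in D$; (5) $occ(a,t)\leftarrow possible(a,t),\mathit{not}\,nocc(a,t)$ for each action $a$; (6) $nocc(a,t)\leftarrow occ(b,t)$ for each pair of distinct actions $a\ne b$; (7) for $t\in\{0,\dots,n-1\}$, $holds(l,t+1)\leftarrow holds(l,t),\mathit{not}\,holds(\bar l,t+1)$ for each fluent literal $l$; (8) $\bot\leftarrow holds(f,t),holds(\neg f,t)$ for each fluent $f$. *)

From Stdlib Require Import List.
From mathcomp Require Import all_boot.
Set Implicit Arguments. Unset Strict Implicit. Unset Printing Implicit Defensive.

Section ActionLanguageB.
Variables (F A : finType).

(* fluent literal: (f, true) is f, (f, false) is ¬f *)
Definition lit := (F * bool)%type.
Definition compl (l : lit) : lit := (l.1, ~~ l.2).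

Record domain := Domain {
  statics : seq (seq lit * lit);          (* caused(P, f)            *)
  dyns    : seq (A * lit * seq lit);      (* causes(a, f, P)          *)
  execs   : seq (A * seq lit)             (* executable(a, P)         *)
}.

Definition litset := lit -> Prop.
Definition subl (u v : litset) := forall l, u l -> v l.
Definition holds_all (P : seq lit) (u : litset) := forall p, p \in P -> u p.

Definition consistent (u : litset) := forall f : F, ~ (u (f, true) /\ u (f, false)).
Definition interpretation (s : litset) :=
  consistent s /\ forall u, consistent u -> subl s u -> subl u s.
Definition closed (D : domain) (u : litset) :=
  forall P f, (P, f) \in statics D -> holds_all P u -> u f.
Definition is_closure (D : domain) (u s : litset) :=
  [/\ consistent s, subl u s, closed D s &
      forall s', consistent s' -> subl u s' -> closed D s' -> subl s s'].
Definition state (D : domain) (s : litset) := interpretation s /\ closed D s.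
Definition executable (D : domain) (a : A) (s : litset) :=
  exists P, (a, P) \in execs D /\ holds_all P s.
Definition effects (D : domain) (a : A) (s : litset) : litset :=
  fun f => exists P, (a, f, P) \in dyns D /\ holds_all P s.
Definition Phi (D : domain) (a : A) (s s' : litset) :=
  executable D a s /\ state D s' /\
  is_closure D (fun l => effects D a s l \/ (s l /\ s' l)) s'.
Definition consistent_domain (D : domain) :=
  forall a s, state D s -> executable D a s -> exists s', Phi D a s s'.
Definition consistent_theory (D : domain) (Gamma : seq lit) :=
  consistent_domain D /\ state D (fun l => l \in Gamma).

Inductive atom :=
  | Holds of lit & nat | Possible of A & nat | Occ of A & nat | Nocc of A & nat.

(* head None = constraint (bottom) *)
Record rule := Rule { rhead : option atom; rpos : list atom; rneg : list atom }.
Definition program := rule -> Prop.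
Definition atomset := atom -> Prop.

(* X is closed under the non-constraint rules of the reduct Pi^S *)
Definition reduct_closed (Pi : program) (S X : atomset) :=
  forall r h, Pi r -> rhead r = Some h ->
    (forall c, List.In c (rneg r) -> ~ S c) ->
    (forall b, List.In b (rpos r) -> X b) -> X h.
Definition answer_set (Pi : program) (S : atomset) :=
  [/\ reduct_closed Pi S S,
      (forall X, reduct_closed Pi S X -> forall x, S x -> X x) &
      (forall r, Pi r -> rhead r = None ->
         (forall c, List.In c (rneg r) -> ~ S c) ->
         ~ (forall b, List.In b (rpos r) -> S b))].

Definition holdsAt (t : nat) (P : seq lit) : list atom := map (fun p => Holds p t) P.

Inductive piB (D : domain) (Gamma : seq lit) (n : nat) : rule -> Prop :=
  | pi1 l : l \in Gamma -> piB D Gamma n (Rule (Some (Holds l 0)) nil nil)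
  | pi2 a P t : (a, P) \in execs D -> t <= n ->
      piB D Gamma n (Rule (Some (Possible a t)) (holdsAt t P) nil)
  | pi3 a f P t : (a, f, P) \in dyns D -> t < n ->
      piB D Gamma n (Rule (Some (Holds f t.+1))
                     (Occ a t :: Possible a t :: holdsAt t P) nil)
  | pi4 P f t : (P, f) \in statics D -> t <= n ->
      piB D Gamma n (Rule (Some (Holds f t)) (holdsAt t P) nil)
  | pi5 a t : t <= n ->
      piB D Gamma n (Rule (Some (Occ a t)) (Possible a t :: nil) (Nocc a t :: nil))
  | pi6 a b t : a <> b -> t <= n ->
      piB D Gamma n (Rule (Some (Nocc a t)) (Occ b t :: nil) nil)
  | pi7 l t : t < n ->
      piB D Gamma n (Rule (Some (Holds l t.+1)) (Holds l t :: nil)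
                     (Holds (compl l) t.+1 :: nil))
  | pi8 f t : t <= n ->
      piB D Gamma n (Rule None (Holds (f, true) t :: Holds (f, false) t :: nil) nil).

End ActionLanguageB.
Arguments Holds {F A}. Arguments Possible {F A}. Arguments Occ {F A}. Arguments Nocc {F A}.

From mathcomp Require Import all_boot.

Set Implicit Arguments.
Unset Strict Implicit.
Unset Printing Implicit Defensive.

(* An answer set is the least model of its reduct, so it satisfies an induction
   principle over rules whose negative bodies it does not block; in particular
   each of its atoms is supported by such a rule.  If no action occurs at time
   t, the only rules of pi that can derive holds(l, t+1) are static laws and
   inertia, so every fluent literal true at t+1 is already true at t.  Hence
   an occurrence occ(a, t+1) would make possible(a, t) true, while nocc(a, t)
   has no support; rule (5) would then fire at t. *)

Section AnswerSets.
Variables (F A : finType) (Pi : program F A) (S : atomset F A).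
Hypothesis answer_S : answer_set Pi S.

Definition supported (h : atom F A) :=
  exists2 r, Pi r & [/\ rhead r = Some h,
    forall c, List.In c (rneg r) -> ~ S c & forall b, List.In b (rpos r) -> S b].

Lemma answer_set_fire r h :
  Pi r -> rhead r = Some h -> (forall c, List.In c (rneg r) -> ~ S c) ->
  (forall b, List.In b (rpos r) -> S b) -> S h.
Proof. by case: answer_S => closed_S _ _; apply: closed_S. Qed.

Lemma answer_set_ind (Q : atom F A -> Prop) :
  (forall r h, Pi r -> rhead r = Some h -> (forall c, List.In c (rneg r) -> ~ S c) ->
     (forall b, List.In b (rpos r) -> S b /\ Q b) -> Q h) ->
  forall x, S x -> Q x.
Proof.
move=> IH x Sx; case: answer_S => _ least_S _.
have closed_SQ : reduct_closed Pi S (fun y => S y /\ Q y).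
  move=> r h Pir rh neg_r pos_r; split; last exact: IH Pir rh neg_r pos_r.
  by apply: answer_set_fire Pir rh neg_r _ => b /pos_r [].
by case: (least_S _ closed_SQ x Sx).
Qed.

Lemma answer_set_supported h : S h -> supported h.
Proof.
apply: answer_set_ind => r {}h Pir rh neg_r pos_r.
by exists r => //; split=> // b /pos_r [].
Qed.

End AnswerSets.

Lemma all_In_holdsAt (F A : finType) (X : atomset F A) (t : nat) (P : seq (lit F)) :
  (forall b, List.In b (holdsAt A t P) -> X b) <-> (forall p, List.In p P -> X (Holds p t)).
Proof.
split=> [XP p Pp | XP b /List.in_map_iff [p [<- Pp]]]; last exact: XP.
by apply: XP; apply/List.in_map_iff; exists p.
Qed.

Section NoOccurrence.
Variables (F A : finType) (D : domain F A) (Gamma : seq (lit F)) (n : nat).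
Variable X : atomset F A.
Hypothesis answer_X : answer_set (piB D Gamma n) X.
Variable t : nat.
Hypothesis no_occ : forall a : A, ~ X (Occ a t).

Lemma holds_succ_holds l : X (Holds l t.+1) -> X (Holds l t).
Proof.
pose Q (x : atom F A) := forall l, x = Holds l t.+1 -> X (Holds l t).
suff /(_ _ _ l erefl) : forall x, X x -> Q x by [].
apply: (answer_set_ind answer_X) => r h Pir rh _ pos_r {}l eq_h; subst h.
case: r / Pir rh pos_r => //= [a f P t' _ _ | P f t' + + | l' t' _].
- move=> [_ ->] pos_r.
  by have [/no_occ] := pos_r _ (or_introl erefl).
- move=> Df le_tn [eq_f eq_t] pos_r; subst f t'.
  apply: (answer_set_fire answer_X (pi4 Gamma Df (ltnW le_tn))) => //.
  apply/all_In_holdsAt => p Pp; apply: (proj2 (pos_r (Holds p t.+1) _)) (erefl _).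
  by apply/List.in_map_iff; exists p.
- move=> [-> ->] pos_r.
  by have [] := pos_r _ (or_introl erefl).
Qed.

Lemma possible_succ_possible a : X (Possible a t.+1) -> X (Possible a t).
Proof.
case/(answer_set_supported answer_X) => r Pir [].
case: r / Pir => //= a' P t' Da le_tn [eq_a eq_t] _ /all_In_holdsAt holds_P.
subst a' t'; apply: (answer_set_fire answer_X (pi2 Gamma Da (ltnW le_tn))) => //.
by apply/all_In_holdsAt => p /holds_P /holds_succ_holds.
Qed.

Lemma not_nocc a : ~ X (Nocc a t).
Proof.
case/(answer_set_supported answer_X) => r Pir [].
case: r / Pir => //= a' b t' _ _ [_ ->] _ pos_r.
exact: no_occ (pos_r _ (or_introl erefl)).
Qed.

Lemma not_occ_succ a : ~ X (Occ a t.+1).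
Proof.
case/(answer_set_supported answer_X) => r Pir [].
case: r / Pir => //= a' t' le_tn [eq_a eq_t] _ pos_r; subst a' t'.
apply: (@no_occ a); apply: (answer_set_fire answer_X (pi5 D Gamma a (ltnW le_tn))) => //=.
- by move=> c [<- | []]; apply: not_nocc.
- by move=> b [<- | []]; apply: possible_succ_possible; apply: pos_r; left.
Qed.

End NoOccurrence.

Theorem mainTheorem7 (F A : finType) (D : domain F A) (Gamma : seq (lit F))
  (n : nat) (X : atomset F A) :
  consistent_theory D Gamma ->
  answer_set (piB D Gamma n) X ->
  forall t, t <= n -> (forall a : A, ~ X (Occ a t)) ->
  forall t', t <= t' <= n -> forall a : A, ~ X (Occ a t').
Proof.
move=> _ answer_X t _ no_occ_t t' /andP[le_tt' _].
rewrite -(subnKC le_tt'); elim: (t' - t) => [|k IHk]; first by rewrite addn0.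
by rewrite addnS; apply: not_occ_succ answer_X _ IHk.
Qed.
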